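(* The optimal objective value of the multi-commodity NPP equals the optimal objective value of the conjugate bilevel formulation $\max_{w,t}\{w^\top t : w\in\mathbb{R}^{\mathcal{A}_1},\ w\ge 0,\ t\in\mathbf{T}(w)\}$.
   Context: Let $G=(\mathcal{V},\mathcal{A})$ be a directed graph with arc costs $c\in\mathbb{R}^{\mathcal{A}}$, $c\ge0$, arcs partitioned into a nonempty set $\mathcal{A}_1\subsetneq\mathcal{A}$ of tolled arcs and $\mathcal{A}_2=\mathcal{A}\setminus\mathcal{A}_1$ of toll-free arcs; $N$ is the node–arc incidence matrix. There is a finite set $\mathcal{K}$ of commodities, commodity $k$ having origin $o^k$, destination $d^k$, with an $o^k$–$d^k$ path of toll-free arcs assumed to exist; $b^k\in\mathbb{R}^{\mathcal{V}}$ has $b^k_{o^k}=1$, $b^k_{d^k}=-1$, other entries $0$. Tolls are vectors $t\in\mathbb{R}^{\mathcal{A}_1}$, $t\ge0$, identified with the vector $\bar t\in\mathbb{R}^{\mathcal{A}}$ equal to $t$ on $\mathcal{A}_1$ and $0$ on $\mathcal{A}_2$; for $x\in\mathbb{R}^{\mathcal{A}}$, $x_{\mathcal{A}_1}$ denotes its restriction to $\mathcal{A}_1$. Follower $k$'s reaction set is $\mathbf{R}^k(t)=\arg\min_x\{c^\top x+t^\top x_{\mathcal{A}_1}: Nx=b^k,\ x\ge0\}$, and the multi-commodity NPP is $\max_{t,x^k}\{\sum_{k}t^\top x^k_{\mathcal{A}_1}: t\ge0,\ x^k\in\mathbf{R}^k(t)\ \forall k\}$. For $w\in\mathbb{R}^{\mathcal{A}_1}$,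 $w\ge0$, the conjugate follower program is $\max_{t,(y^k)}\{\sum_{k\in\mathcal{K}}(b^k)^\top y^k - w^\top t : N^\top y^k-\bar t\le c\ \forall k\in\mathcal{K},\ t\ge 0\}$ with $t\in\mathbb{R}^{\mathcal{A}_1}$, $y^k\in\mathbb{R}^{\mathcal{V}}$, and $\mathbf{T}(w)$ denotes the set of $t$ that are parts of optimal solutions of this program. *)

From HB Require Import structures.
From mathcomp Require Import all_boot all_order all_algebra.
From mathcomp Require Import classical_sets reals constructive_ereal ereal.
Set Implicit Arguments. Unset Strict Implicit. Unset Printing Implicit Defensive.
Import Order.TTheory GRing.Theory Num.Theory.
Local Open Scope ring_scope.
Local Open Scope classical_set_scope.

Section NPP.
Variables (R : realType) (V A K : finType).
Variables (src tgt : A -> V).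
Variable c : A -> R.
Variable A1 : {set A}.          (* tolled arcs; A2 = ~: A1 *)
Variables (o d : K -> V).

(* index type of tolled arcs: toll vectors t live in R^{A1} *)
Definition tolled := {a : A | a \in A1}.

Definition tbar (t : tolled -> R) (a : A) : R :=
  match insub a with Some a' => t a' | None => 0 end.

(* node-arc incidence matrix N applied to x in R^A *)
Definition Nmul (x : A -> R) (v : V) : R :=
  \sum_(a : A | src a == v) x a - \sum_(a : A | tgt a == v) x a.

(* N^T applied to y in R^V *)
Definition NTmul (y : V -> R) (a : A) : R := y (src a) - y (tgt a).

Definition bvec (k : K) (v : V) : R :=
  (v == o k)%:R - (v == d k)%:R.

Fixpoint walk (v w : V) (p : seq A) : bool :=
  match p with
  | [::] => v == w
  | a :: p' => (src a == v) && walk (tgt a) w p'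
  end.

Definition tollfree_path (k : K) : Prop :=
  exists p : seq A, all (fun a => a \notin A1) p && walk (o k) (d k) p.

Definition flow_feasible (k : K) (x : A -> R) : Prop :=
  (forall a, 0 <= x a) /\ (forall v, Nmul x v = bvec k v).

Definition follower_cost (t : tolled -> R) (x : A -> R) : R :=
  \sum_(a : A) c a * x a + \sum_(a : tolled) t a * x (val a).

Definition reaction (k : K) (t : tolled -> R) (x : A -> R) : Prop :=
  flow_feasible k x /\
  forall x', flow_feasible k x' -> follower_cost t x <= follower_cost t x'.

Definition revenue (t : tolled -> R) (x : K -> A -> R) : R :=
  \sum_(k : K) \sum_(a : tolled) t a * x k (val a).

Definition NPP_value : \bar R :=
  ereal_sup [set r | exists (t : tolled -> R) (x : K -> A -> R),
     [/\ forall a, 0 <= t a, forall k, reaction k t (x k) & r = (revenue t x)%:E]].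

Definition conj_feasible (t : tolled -> R) (y : K -> V -> R) : Prop :=
  (forall a, 0 <= t a) /\ (forall k a, NTmul (y k) a - tbar t a <= c a).

Definition conj_obj (w : tolled -> R) (t : tolled -> R) (y : K -> V -> R) : R :=
  \sum_(k : K) \sum_(v : V) bvec k v * y k v - \sum_(a : tolled) w a * t a.

Definition Tset (w : tolled -> R) : set (tolled -> R) :=
  [set t | exists y, conj_feasible t y /\
     forall t' y', conj_feasible t' y' -> conj_obj w t' y' <= conj_obj w t y].

Definition wdot (w t : tolled -> R) : R := \sum_(a : tolled) w a * t a.

Definition conj_value : \bar R :=
  ereal_sup [set r | exists (w t : tolled -> R),
     [/\ forall a, 0 <= w a, Tset w t & r = (wdot w t)%:E]].

End NPP.

From mathcomp Require Import all_boot all_order all_algebra.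
From mathcomp Require Import classical_sets reals constructive_ereal ereal.
From mathcomp Require Import lra.
Import Order.TTheory GRing.Theory Num.Theory.
Local Open Scope ring_scope.
Set Implicit Arguments. Unset Strict Implicit.

(* Both inequalities come from weak LP duality for the followers'
   shortest-path problems.  Given tolls t with optimal flows x^k, put
   w := sum_k x^k on the tolled arcs: the revenue is then w.t, and with y the
   shortest-path potentials for the costs c + t, the pair (t, y) is optimal in
   the conjugate program, because every feasible (t', y') has objective at
   most sum_k c.x^k, a value that (t, y) attains.  Conversely, given w >= 0 and
   t in T(w), scale the tolls to lam t with 0 < lam < 1 and let the followers
   use shortest walks P_k; comparing (t, y) with lam t and its potentials gives
   (1 - lam) (w.t - sum_k t(P_k)) <= 0, so the revenue lam sum_k t(P_k) is at
   least lam w.t, and lam -> 1 concludes (for lam = 1 the comparison is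
   vacuous).  Since c >= 0, shortest walks may be taken with at most |A|
   arcs. *)

Section Walks.
Variables (V A : finType) (src tgt : A -> V).

Local Notation walk := (walk src tgt).

Lemma walk_suffix v w p1 a p2 : walk v w (p1 ++ a :: p2) -> walk (tgt a) w p2.
Proof. by elim: p1 v => [|b p1 IH] v /=; case/andP => // _ /IH. Qed.

Lemma walk_telescope (R : zmodType) (f : V -> R) v w p :
  walk v w p -> \sum_(b <- p) (f (src b) - f (tgt b)) = f v - f w.
Proof.
elim: p v => [|b p IH] v /=; first by move/eqP->; rewrite big_nil subrr.
by case/andP=> /eqP <- /IH; rewrite big_cons => ->; rewrite addrA subrK.
Qed.

Definition walk_flow (R : pzSemiRingType) (p : seq A) (a : A) : R :=
  \sum_(b <- p) (b == a)%:R.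

Lemma walk_flow_ge0 (R : numDomainType) p a : 0 <= walk_flow R p a.
Proof. exact: sumr_ge0. Qed.

Lemma sum_walk_flow (R : pzSemiRingType) (l : A -> R) p :
  \sum_a l a * walk_flow R p a = \sum_(b <- p) l b.
Proof.
under eq_bigr do rewrite mulr_sumr.
rewrite exchange_big /=; apply: eq_bigr => b _.
under eq_bigr do rewrite mulr_natr mulrb eq_sym.
by rewrite -big_mkcond big_pred1_eq.
Qed.

Lemma sum_walk_flow_cond (R : pzSemiRingType) (P : pred A) p :
  \sum_(a | P a) walk_flow R p a = \sum_(b <- p) (P b)%:R.
Proof.
rewrite -sum_walk_flow big_mkcond; apply: eq_bigr => a _.
by rewrite mulr_natl mulrb.
Qed.

Lemma Nmul_walk_flow (R : realType) p v w u :
  walk v w p -> Nmul src tgt (walk_flow R p) u = (u == v)%:R - (u == w)%:R.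
Proof.
move=> pvw; rewrite /Nmul !sum_walk_flow_cond -sumrB.
by rewrite (walk_telescope (fun z => (z == u)%:R) pvw) ![u == _]eq_sym.
Qed.

Lemma sum_Nmul_mul (R : realType) (x : A -> R) (y : V -> R) :
  \sum_v Nmul src tgt x v * y v = \sum_a NTmul src tgt y a * x a.
Proof.
have push (f : A -> V) :
    \sum_(v : V) (\sum_(a | f a == v) x a) * y v = \sum_a x a * y (f a).
  rewrite (partition_big f xpredT) //=; apply: eq_bigr => v _.
  by rewrite mulr_suml; apply: eq_bigr => a /eqP ->.
under eq_bigr do rewrite mulrBl.
rewrite sumrB !push -sumrB; apply: eq_bigr => a _.
by rewrite /NTmul mulrBl !(mulrC (x a)).
Qed.

Section ShortestWalks.
Variables (R : realDomainType) (l : A -> R).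
Hypothesis l_ge0 : forall a, 0 <= l a.

(* Capped at M, which is also the value when there is no walk from v to w. *)
Definition dist (M : R) (w v : V) : R :=
  \big[Order.min/M]_(q : #|A|.-bseq A | walk v w q) \sum_(a <- q) l a.

Lemma walk_shorten v w p : walk v w p ->
  exists2 q, uniq q && walk v w q & \sum_(a <- q) l a <= \sum_(a <- p) l a.
Proof.
elim: p v => [|b p IH] v /=; first by exists [::].
case/andP=> /eqP <- /IH [q /andP[uq qw] le_qp].
have [bq|bq] := boolP (b \in q); last first.
  by exists (b :: q); rewrite /= ?bq ?uq ?eqxx // !big_cons lerD2l.
case/splitPr: bq uq qw le_qp => q1 q2 uq qw le_qp.
exists (b :: q2).
  rewrite /= eqxx (walk_suffix qw) !andbT.
  by move: uq; rewrite cat_uniq => /and3P[].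
rewrite !big_cons lerD2l; apply: le_trans le_qp.
by rewrite big_cat big_cons /= addrA lerDr addr_ge0 ?sumr_ge0.
Qed.

Lemma walk_shorten_bseq v w p : walk v w p ->
  exists2 q : #|A|.-bseq A, walk v w q & \sum_(a <- q) l a <= \sum_(a <- p) l a.
Proof.
case/walk_shorten => q /andP[uq qw] le_qp.
have size_q : (size q <= #|A|)%N by rewrite -(card_uniqP uq) max_card.
by exists (Bseq size_q).
Qed.

Lemma dist_le_cap M w v : dist M w v <= M.
Proof. exact: bigmin_le_id. Qed.

Lemma dist_le_walk M w v p : walk v w p -> dist M w v <= \sum_(a <- p) l a.
Proof. by case/walk_shorten_bseq => q; apply: bigmin_inf. Qed.

Lemma dist_self M w : 0 <= M -> dist M w w = 0.
Proof.
move=> M_ge0; apply/le_anti/andP; split.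
  by rewrite -(big_nil 0 +%R predT l) dist_le_walk //= eqxx.
by apply/bigmin_geP; split=> // q _; apply: sumr_ge0.
Qed.

Lemma dist_sub_le M w a : dist M w (src a) - dist M w (tgt a) <= l a.
Proof.
rewrite lerBlDr -lerBlDl; apply/bigmin_geP; split=> [|q qw].
  by rewrite lerBlDl ler_wpDl ?dist_le_cap.
have aqw : walk (src a) w (a :: q) by rewrite /= eqxx.
by have := dist_le_walk M aqw; rewrite big_cons lerBlDl.
Qed.

Lemma dist_attained w v q : walk v w q ->
  exists2 p, walk v w p & dist (\sum_(a <- q) l a) w v = \sum_(a <- p) l a.
Proof.
move=> qw; rewrite /dist; elim/big_ind: _ => [|r1 r2 [p1 p1w ->] [p2 p2w ->]|p pw].
- by exists q.
- by rewrite minEle; case: ifP; [exists p1|exists p2].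
- by exists p.
Qed.

End ShortestWalks.
End Walks.

Section Pricing.
Variables (R : realType) (V A K : finType) (src tgt : A -> V) (c : A -> R).
Variables (A1 : {set A}) (o d : K -> V).
Hypothesis c_ge0 : forall a, 0 <= c a.
Hypothesis tollfree : forall k, tollfree_path src tgt A1 o d k.

Local Notation walk := (walk src tgt).
Local Notation flow_feasible := (flow_feasible src tgt o d).
Local Notation reaction := (reaction src tgt c o d).
Local Notation conj_feasible := (conj_feasible src tgt c).
Local Notation Tset := (Tset src tgt c o d).

Lemma sum_tolled (t : tolled A1 -> R) (x : A -> R) :
  \sum_(a : tolled A1) t a * x (val a) = \sum_a tbar t a * x a.
Proof.
rewrite (bigID (mem A1)) /= [X in _ + X]big1 ?addr0 => [|a /negbTE aA1]; last first.
  by rewrite /tbar insubF ?mul0r.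
rewrite (reindex_omap (val : tolled A1 -> A) insub) => [|a aA1]; last by rewrite insubT.
apply: eq_big => [[a aA1]|[a aA1] _] /=; first by rewrite aA1 insubT /= eqxx.
by rewrite /tbar insubT.
Qed.

Lemma tbar_ge0 (t : tolled A1 -> R) a : (forall b, 0 <= t b) -> 0 <= tbar t a.
Proof. by move=> t_ge0; rewrite /tbar; case: insub. Qed.

Lemma follower_cost_tbar (t : tolled A1 -> R) (x : A -> R) :
  follower_cost c t x = \sum_a (c a + tbar t a) * x a.
Proof.
rewrite /follower_cost sum_tolled -big_split.
by apply: eq_bigr => a _; rewrite mulrDl.
Qed.

Lemma sum_bvec_mul k (y : V -> R) : \sum_v bvec R o d k v * y v = y (o k) - y (d k).
Proof.
have pick z : \sum_v (v == z)%:R * y v = y z.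
  by under eq_bigr do rewrite mulr_natl mulrb; rewrite -big_mkcond big_pred1_eq.
by under eq_bigr do rewrite mulrBl; rewrite sumrB !pick.
Qed.

Lemma walk_flow_feasible k p : walk (o k) (d k) p -> flow_feasible k (walk_flow R p).
Proof.
move=> pw; split=> [a|v]; first exact: walk_flow_ge0.
by rewrite (Nmul_walk_flow R _ pw).
Qed.

Lemma weak_duality k x y (l : A -> R) : flow_feasible k x ->
  (forall a, NTmul src tgt y a <= l a) -> \sum_v bvec R o d k v * y v <= \sum_a l a * x a.
Proof.
case=> x_ge0 Nx y_le; under eq_bigr do rewrite -Nx.
by rewrite sum_Nmul_mul; apply: ler_sum => a _; apply: ler_wpM2r.
Qed.

Lemma reaction_potential k (t : tolled A1 -> R) : (forall a, 0 <= t a) -> exists x y,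
  [/\ reaction k t x, forall a, NTmul src tgt y a - tbar t a <= c a
    & \sum_v bvec R o d k v * y v = follower_cost c t x].
Proof.
move=> t_ge0; pose l a := c a + tbar t a.
have l_ge0 a : 0 <= l a by rewrite addr_ge0 ?tbar_ge0.
have [q0 /andP[_ q0w]] := tollfree k.
pose y := dist src tgt l (\sum_(a <- q0) l a) (d k).
have [p pw yo] := dist_attained l q0w.
have y_le a : NTmul src tgt y a <= l a by apply: dist_sub_le.
have cost_p : \sum_v bvec R o d k v * y v = follower_cost c t (walk_flow R p).
  rewrite sum_bvec_mul /y yo dist_self ?sumr_ge0 // subr0.
  by rewrite follower_cost_tbar sum_walk_flow.
exists (walk_flow R p), y; split=> // [|a]; last by rewrite lerBlDr y_le.
split=> [|x' x'_feas]; first exact: walk_flow_feasible.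
by rewrite -cost_p follower_cost_tbar; apply: weak_duality.
Qed.

Lemma reactions_potentials (t : tolled A1 -> R) : (forall a, 0 <= t a) ->
  exists x y, [/\ forall k, reaction k t (x k), conj_feasible t y
    & forall k, \sum_v bvec R o d k v * y k v = follower_cost c t (x k)].
Proof.
move=> t_ge0.
have /fin_all_exists [x /fin_all_exists [y xy]] := fun k => reaction_potential k t_ge0.
exists x, y; split=> [k||k]; try by case: (xy k).
by split=> // k; case: (xy k).
Qed.

Lemma sum_bvec_le_follower_cost (t : tolled A1 -> R) (x : K -> A -> R) y :
  conj_feasible t y -> (forall k, flow_feasible k (x k)) ->
  \sum_k \sum_v bvec R o d k v * y k v <= \sum_k follower_cost c t (x k).
Proof.
case=> _ y_le x_feas; apply: ler_sum => k _; rewrite follower_cost_tbar.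
by apply: weak_duality => // a; rewrite -lerBlDr y_le.
Qed.

Lemma sum_follower_cost (t : tolled A1 -> R) (x : K -> A -> R) :
  \sum_k follower_cost c t (x k) = \sum_k \sum_a c a * x k a + revenue t x.
Proof. exact: big_split. Qed.

Definition arc_load (x : K -> A -> R) (a : tolled A1) : R := \sum_k x k (val a).

Lemma revenue_arc_load (t : tolled A1 -> R) x : revenue t x = wdot (arc_load x) t.
Proof.
rewrite /revenue exchange_big; apply: eq_bigr => a _.
by rewrite /arc_load mulr_suml; apply: eq_bigr => k _; rewrite mulrC.
Qed.

Lemma wdotZr (lam : R) (w t : tolled A1 -> R) :
  wdot w (fun a => lam * t a) = lam * wdot w t.
Proof. by rewrite /wdot mulr_sumr; apply: eq_bigr => a _; rewrite mulrCA. Qed.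

Lemma Tset_arc_load (t : tolled A1 -> R) x :
  (forall a, 0 <= t a) -> (forall k, reaction k t (x k)) -> Tset (arc_load x) t.
Proof.
move=> t_ge0 x_react.
have [x' [y [x'_react y_feas y_cost]]] := reactions_potentials t_ge0.
have x_feas k : flow_feasible k (x k) by case: (x_react k).
exists y; split=> // t' y' y'_feas.
rewrite /conj_obj -!/(wdot _ _) -!revenue_arc_load.
apply: (@le_trans _ _ (\sum_k \sum_a c a * x k a)).
  by rewrite lerBlDr -sum_follower_cost sum_bvec_le_follower_cost.
rewrite lerBrDr -sum_follower_cost (eq_bigr _ (fun k _ => y_cost k)).
by apply: ler_sum => k _; case: (x_react k) => _; apply; case: (x'_react k).
Qed.

Lemma revenue_scaled_tolls (w t : tolled A1 -> R) (lam : R) : Tset w t -> 0 < lam < 1 ->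
  exists (s : tolled A1 -> R) (x : K -> A -> R),
    [/\ forall a, 0 <= s a, forall k, reaction k s (x k)
    & lam * wdot w t <= revenue s x].
Proof.
case=> y [y_feas y_opt] /andP[lam_gt0 lam_lt1].
have [t_ge0 _] := y_feas.
pose s a := lam * t a.
have s_ge0 a : 0 <= s a by apply: mulr_ge0; [apply: ltW | apply: t_ge0].
have [x [Y [x_react Y_feas Y_cost]]] := reactions_potentials s_ge0.
have x_feas k : flow_feasible k (x k) by case: (x_react k).
exists s, x; split=> //.
have opt := y_opt _ _ Y_feas.
rewrite /conj_obj -!/(wdot _ _) wdotZr (eq_bigr _ (fun k _ => Y_cost k)) in opt.
rewrite sum_follower_cost in opt.
have dual := sum_bvec_le_follower_cost y_feas x_feas.
rewrite sum_follower_cost in dual.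
have rev_s : revenue s x = lam * revenue t x by rewrite !revenue_arc_load wdotZr.
rewrite rev_s in opt *; apply: (ler_wpM2l (ltW lam_gt0)).
have : (1 - lam) * (wdot w t - revenue t x) <= 0 by lra.
by rewrite pmulr_rle0 ?subr_gt0 // subr_le0.
Qed.

End Pricing.

Theorem proposition1 (R : realType) (V A K : finType) (src tgt : A -> V)
  (c : A -> R) (A1 : {set A}) (o d : K -> V)
  (hc : forall a, 0 <= c a)
  (hA1ne : A1 != finset.set0) (hA1pr : A1 != finset.setT)
  (hod : forall k, o k != d k)
  (hpath : forall k, tollfree_path src tgt A1 o d k) :
  NPP_value src tgt c A1 o d = conj_value src tgt c A1 o d.
Proof.
apply/le_anti/andP; split.
  apply: ereal_sup_le => _ [t [x [t_ge0 x_react ->]]].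
  exists (arc_load x), t; split; last by rewrite revenue_arc_load.
  - by move=> a; apply: sumr_ge0 => k _; case: (x_react k) => -[x_ge0 _] _.
  - exact: Tset_arc_load.
apply: ge_ereal_sup => _ [w [t [w_ge0 Tw ->]]].
have [y [[t_ge0 _] _]] := Tw.
apply/lee_mul01Pr => [|lam lam01].
  by rewrite lee_fin sumr_ge0 // => a _; rewrite mulr_ge0.
have [s [x [s_ge0 x_react le_rev]]] := revenue_scaled_tolls hc hpath Tw lam01.
apply: (@le_trans _ _ (revenue s x)%:E); first by rewrite lee_fin.
by apply: ereal_sup_ubound; exists s, x.
Qed.
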